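(* Let $\Gamma\cup\{\varphi\}\subseteq{\bf F}(\Sigma,\mathcal{V})$ be finite. If $\Gamma\vdash_{\mathbb{T}_1}\varphi$ then $\Gamma\vDash^{\mathsf{RN}}_{\mathcal{RM}_{C_1}}\varphi$.
   Context: $\Sigma$ has unary $\neg$ and binary $\wedge,\vee,\to$. $\mathcal{A}_{C_1}$ is the $\Sigma$-multialgebra on $\{F,t,T\}$, $D=\{t,T\}$: $F\tilde\vee F=\{F\}$, $F\tilde\vee T=T\tilde\vee F=T\tilde\vee T=\{T\}$, $x\tilde\vee y=D$ if $t\in\{x,y\}$; $x\tilde\wedge y=\{F\}$ if $F\in\{x,y\}$, $T\tilde\wedge T=\{T\}$, $t\tilde\wedge t=t\tilde\wedge T=T\tilde\wedge t=D$; $\tilde\neg F=\{T\}$, $\tilde\neg t=D$, $\tilde\neg T=\{F\}$; $F\tilde\to F=F\tilde\to T=T\tilde\to T=\{T\}$, $t\tilde\to F=T\tilde\to F=\{F\}$, $x\tilde\to t=D$, $t\tilde\to T=D$. Valuations: $\nu(\neg\alpha)\in\tilde\neg\nu(\alpha)$, $\nu(\alpha\#\beta)\in\nu(\alpha)\tilde\#\nu(\beta)$; $\mathcal{F}_{C_1}$ = valuations with $\nu(\alpha)=t\Rightarrow\nu(\alpha\wedge\neg\alpha)=T$. $\Gamma\vDash^{\mathsf{RN}}_{\mathcal{RM}_{C_1}}\varphi$ iff every $\nu\in\mathcal{F}_{C_1}$ with $\nu[\Gamma]\subseteq D$ has $\nu(\varphi)\in D$. Tableau system $\mathbb{T}_1$: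 signed formulas $\mathsf{L}(\varphi)$ with $\mathsf{L}\in\{\mathsf{T},\mathsf{t},\mathsf{F}\}$. Rules (branches separated by $\mid$; commas inside a branch list formulas added together): $\mathsf{T}(\neg\varphi)$: $\mathsf{F}(\varphi)\mid\mathsf{t}(\varphi)$; $\mathsf{t}(\neg\varphi)$: $\mathsf{t}(\varphi)$; $\mathsf{F}(\neg\varphi)$: $\mathsf{T}(\varphi)$; $\mathsf{T}(\varphi\wedge\psi)$: $\mathsf{T}\varphi,\mathsf{T}\psi\mid\mathsf{T}\varphi,\mathsf{t}\psi\mid\mathsf{t}\varphi,\mathsf{T}\psi\mid\mathsf{t}\varphi,\mathsf{t}\psi$; $\mathsf{t}(\varphi\wedge\psi)$: $\mathsf{T}\varphi,\mathsf{t}\psi\mid\mathsf{t}\varphi,\mathsf{T}\psi\mid\mathsf{t}\varphi,\mathsf{t}\psi$; $\mathsf{F}(\varphi\wedge\psi)$: $\mathsf{F}\varphi\mid\mathsf{F}\psi$; $\mathsf{T}(\varphi\vee\psi)$: $\mathsf{T}\varphi\mid\mathsf{t}\varphi\mid\mathsf{T}\psi\mid\mathsf{t}\psi$; $\mathsf{t}(\varphi\vee\psi)$: $\mathsf{t}\varphi\mid\mathsf{t}\psi$; $\mathsf{F}(\varphi\vee\psi)$: $\mathsf{F}\varphi,\mathsf{F}\psi$; $\mathsf{T}(\varphi\to\psi)$: $\mathsf{F}\varphi\mid\mathsf{T}\psi\mid\mathsf{t}\psi$; $\mathsf{t}(\varphi\to\psi)$: $\mathsf{t}\varphi,\mathsf{T}\psi\mid\mathsf{t}\psi$;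 $\mathsf{F}(\varphi\to\psi)$: $\mathsf{T}\varphi,\mathsf{F}\psi\mid\mathsf{t}\varphi,\mathsf{F}\psi$. A branch is closed if it contains $\mathsf{L}(\psi)$ and $\mathsf{L}'(\psi)$ with $\mathsf{L}\ne\mathsf{L}'$, or some $\mathsf{t}(\psi\wedge\neg\psi)$. A tableau is closed if all its branches are closed (i.e., it contains no open complete branch). $\vdash_{\mathbb{T}_1}\varphi$ iff there is a closed tableau starting from $\mathsf{F}(\varphi)$; for $\Gamma=\{\gamma_1,\dots,\gamma_n\}$, $\Gamma\vdash_{\mathbb{T}_1}\varphi$ iff $\vdash_{\mathbb{T}_1}\gamma_1\to(\gamma_2\to\dots(\gamma_n\to\varphi)\dots)$. *)

From Stdlib Require Import List.
Import ListNotations.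

Inductive form : Type :=
| Var : nat -> form
| Neg : form -> form
| And : form -> form -> form
| Or  : form -> form -> form
| Imp : form -> form -> form.

Inductive tv : Type := vF | vt | vT.

Definition designated (x : tv) : Prop := x = vt \/ x = vT.

(* Multioperations of A_{C1}, as membership predicates  y \in x ~# z. *)
Definition mneg (x y : tv) : Prop :=
  match x with
  | vF => y = vT
  | vt => designated y
  | vT => y = vF
  end.

Definition mor (x z y : tv) : Prop :=
  match x, z with
  | vF, vF => y = vF
  | vt, _ | _, vt => designated y
  | _, _ => y = vT
  end.

Definition mand (x z y : tv) : Prop :=
  match x, z with
  | vF, _ | _, vF => y = vF
  | vT, vT => y = vT
  | _, _ => designated y
  end.

Definition mimp (x z y : tv) : Prop :=
  match x, z with
  | _, vt => designated y
  | vt, vT => designated y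
  | vF, vF | vF, vT | vT, vT => y = vT
  | vt, vF | vT, vF => y = vF
  end.

Definition valuation (v : form -> tv) : Prop :=
  forall a b : form,
    mneg (v a) (v (Neg a)) /\
    mand (v a) (v b) (v (And a b)) /\
    mor (v a) (v b) (v (Or a b)) /\
    mimp (v a) (v b) (v (Imp a b)).

Definition in_FC1 (v : form -> tv) : Prop :=
  valuation v /\ forall a, v a = vt -> v (And a (Neg a)) = vT.

Definition RN_consequence (Gamma : form -> Prop) (phi : form) : Prop :=
  forall v, in_FC1 v -> (forall g, Gamma g -> designated (v g)) ->
    designated (v phi).

Inductive label : Type := LT | Lt | LF.
Definition signed : Type := (label * form)%type.

(* Tableau rules of T_1: list of branches, each a list of signed formulas
   added together. Atomic signed formulas have no rule. *)
Definition rule (s : signed) : option (list (list signed)) :=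
  match s with
  | (LT, Neg a) => Some [[(LF, a)]; [(Lt, a)]]
  | (Lt, Neg a) => Some [[(Lt, a)]]
  | (LF, Neg a) => Some [[(LT, a)]]
  | (LT, And a b) => Some [[(LT, a); (LT, b)]; [(LT, a); (Lt, b)];
                          [(Lt, a); (LT, b)]; [(Lt, a); (Lt, b)]]
  | (Lt, And a b) => Some [[(LT, a); (Lt, b)]; [(Lt, a); (LT, b)];
                          [(Lt, a); (Lt, b)]]
  | (LF, And a b) => Some [[(LF, a)]; [(LF, b)]]
  | (LT, Or a b) => Some [[(LT, a)]; [(Lt, a)]; [(LT, b)]; [(Lt, b)]]
  | (Lt, Or a b) => Some [[(Lt, a)]; [(Lt, b)]]
  | (LF, Or a b) => Some [[(LF, a); (LF, b)]]
  | (LT, Imp a b) => Some [[(LF, a)]; [(LT, b)]; [(Lt, b)]]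
  | (Lt, Imp a b) => Some [[(Lt, a); (LT, b)]; [(Lt, b)]]
  | (LF, Imp a b) => Some [[(LT, a); (LF, b)]; [(Lt, a); (LF, b)]]
  | (_, Var _) => None
  end.

Definition branch_closed (B : list signed) : Prop :=
  (exists l l' psi, l <> l' /\ In (l, psi) B /\ In (l', psi) B) \/
  (exists psi, In (Lt, And psi (Neg psi)) B).

(* [closable B]: there is a (finite) closed tableau extending the branch B,
   i.e. every branch of the tree obtained by successively applying rules
   to signed formulas occurring on the branch is closed. *)
Inductive closable : list signed -> Prop :=
| cl_closed : forall B, branch_closed B -> closable B
| cl_expand : forall B s alts,
    In s B -> rule s = Some alts ->
    (forall alt, In alt alts -> closable (alt ++ B)) ->
    closable B.

Definition T1_provable (phi : form) : Prop := closable [(LF, phi)].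

Fixpoint imp_chain (Gamma : list form) (phi : form) : form :=
  match Gamma with
  | [] => phi
  | g :: gs => Imp g (imp_chain gs phi)
  end.

Definition T1_derives (Gamma : list form) (phi : form) : Prop :=
  T1_provable (imp_chain Gamma phi).

(* The argument has three parts:
   - every rule of T_1 is sound for arbitrary valuations of A_{C1}: if v
     satisfies the premise, it satisfies every formula of some alternative;
   - no valuation in F_{C1} satisfies a closed branch (the restriction
     defining F_{C1} is exactly what rules out t(psi /\ ~psi));
   - hence, by induction on closability, no valuation in F_{C1} satisfies
     a closable branch.
   For the theorem, a countermodel v in F_{C1} of Gamma |= phi gives
   v(phi) = F while Gamma is designated, so the implication chain
   gamma_1 -> ... -> phi also takes the value F and v satisfies the root
   F(gamma_1 -> ... -> phi) of the closed tableau, a contradiction. *)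
From Stdlib Require Import List.
Import ListNotations.

Definition label_value (l : label) : tv :=
  match l with LT => vT | Lt => vt | LF => vF end.

Definition sat (v : form -> tv) (s : signed) : Prop :=
  v (snd s) = label_value (fst s).

Lemma rule_sound (v : form -> tv) (s : signed) (alts : list (list signed)) :
  valuation v -> sat v s -> rule s = Some alts ->
  Exists (Forall (sat v)) alts.
Proof.
  intros Hval. destruct s as [l a].
  destruct a as [n | a | a b | a b | a b]; destruct l; intros Hs Hrule;
    try discriminate; injection Hrule as <-;
    rewrite ?Exists_cons, ?Exists_nil, ?Forall_cons_iff, ?Forall_nil_iff;
    unfold sat in *; simpl in *;
    first [ destruct (Hval a b) as (_ & Hand & Hor & Himp)
          | destruct (Hval a a) as (Hneg & _) ];
    revert Hs; try revert Hneg; try revert Hand Hor Himp;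
    repeat match goal with |- context [v ?x] => destruct (v x) end;
    simpl; unfold designated; intuition congruence.
Qed.

(* In F_{C1} a conjunction psi /\ ~psi never takes the value t: it is F
   unless v(psi) = t, and then the restriction forces it to be T. *)
Lemma FC1_contradiction_not_t (v : form -> tv) (psi : form) :
  in_FC1 v -> v (And psi (Neg psi)) <> vt.
Proof.
  intros [Hval Hrestr].
  destruct (Hval psi psi) as (Hneg & _).
  destruct (Hval psi (Neg psi)) as (_ & Hand & _).
  specialize (Hrestr psi).
  revert Hneg Hand Hrestr.
  destruct (v psi), (v (Neg psi)), (v (And psi (Neg psi)));
    simpl; unfold designated; intuition congruence.
Qed.

Lemma closed_branch_unsat (v : form -> tv) (B : list signed) :
  in_FC1 v -> Forall (sat v) B -> ~ branch_closed B.
Proof.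
  rewrite Forall_forall. unfold sat. intros Hv HB
    [(l & l' & psi & Hne & Hin & Hin') | (psi & Hin)].
  - apply HB in Hin; apply HB in Hin'. simpl in *.
    rewrite Hin in Hin'. destruct l, l'; simpl in *; congruence.
  - apply HB in Hin. exact (FC1_contradiction_not_t v psi Hv Hin).
Qed.

Lemma closable_unsat (v : form -> tv) (B : list signed) :
  in_FC1 v -> closable B -> ~ Forall (sat v) B.
Proof.
  intros Hv Hc. induction Hc as [B Hclosed | B s alts Hin Hrule _ IH]; intros HB.
  - exact (closed_branch_unsat v B Hv HB Hclosed).
  - rewrite Forall_forall in HB.
    pose proof (rule_sound v s alts (proj1 Hv) (HB s Hin) Hrule) as Halt.
    apply Exists_exists in Halt as (alt & Hin_alt & Hsat_alt).
    apply (IH alt Hin_alt). apply Forall_app. split; [exact Hsat_alt |].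
    now apply Forall_forall.
Qed.

(* If every premise is designated and the conclusion is F, the whole
   implication chain is F, since D ~-> F = {F}. *)
Lemma imp_chain_false (v : form -> tv) (Gamma : list form) (phi : form) :
  valuation v -> (forall g, In g Gamma -> designated (v g)) -> v phi = vF ->
  v (imp_chain Gamma phi) = vF.
Proof.
  intros Hval HGamma Hphi. induction Gamma as [| g gs IH]; simpl; [exact Hphi |].
  destruct (Hval g (imp_chain gs phi)) as (_ & _ & _ & Himp).
  rewrite IH in Himp by (intros; apply HGamma; simpl; auto).
  destruct (HGamma g (or_introl eq_refl)) as [Hg | Hg]; rewrite Hg in Himp; exact Himp.
Qed.

Theorem mainTheorem14 (Gamma : list form) (phi : form) :
  T1_derives Gamma phi -> RN_consequence (fun g => In g Gamma) phi.
Proof.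
  intros Htableau v Hv HGamma. unfold designated.
  destruct (v phi) eqn:Hphi; auto. exfalso.
  apply (closable_unsat v _ Hv Htableau).
  repeat constructor. unfold sat; simpl.
  exact (imp_chain_false v Gamma phi (proj1 Hv) HGamma Hphi).
Qed.
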